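(* Let $M\in\mathbb{R}^{m\times m}$ be symmetric positive definite, let $\delta_1,\dots,\delta_{s+1}>0$, $\Delta=\mathrm{diag}(\delta_1,\dots,\delta_s)$ and $\Delta_{\mathrm{new}}=\mathrm{diag}(\delta_1,\dots,\delta_{s+1})$, and let $U\in\mathbb{R}^{m\times s}$. Suppose $U\Delta=V\Sigma W^*$ is the exact core SVD of $U\Delta:\mathbb{R}^s_\Delta\to\mathbb{R}^m_M$, where $V\in\mathbb{R}^{m\times k}$ with $V^TMV=I$, $W\in\mathbb{R}^{s\times k}$ with $W^T\Delta W=I$, $W^*=W^T\Delta$, and $\Sigma\in\mathbb{R}^{k\times k}$. Let $c\in\mathbb{R}^m$ and define $$h=c-VV^*c,\quad p=\|h\|_M,\quad Q=\begin{bmatrix}\Sigma&\delta_{s+1}^{1/2}V^*c\\0&\delta_{s+1}^{1/2}p\end{bmatrix}\in\mathbb{R}^{(k+1)\times(k+1)},$$ where $V^*=V^TM$. If $p>0$ and the standard core SVD of $Q$ is $Q=V_Q\Sigma_QW_Q^T$, then the core SVD of $[\,U\ c\,]\Delta_{\mathrm{new}}:\mathbb{R}^{s+1}_{\Delta_{\mathrm{new}}}\to\mathbb{R}^m_M$ is given by $$[\,U\ c\,]\Delta_{\mathrm{new}}=V_{\mathrm{new}}\Sigma_QW_{\mathrm{new}}^*,$$ where $V_{\mathrm{new}}=[\,V\ j\,]V_Q$ with $j=h/p$, $W_{\mathrm{new}}=W_uW_Q$ with $W_u=\begin{bmatrix}W&0\\0&\delta_{s+1}^{-1/2}\end{bmatrix}$,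 and $W_{\mathrm{new}}^*=W_{\mathrm{new}}^T\Delta_{\mathrm{new}}$.
   Context: For symmetric positive definite $M$, $\mathbb{R}^m_M$ is $\mathbb{R}^m$ with inner product $(x,y)_M=y^TMx$ and norm $\|x\|_M=(x^TMx)^{1/2}$; similarly for $\mathbb{R}^s_\Delta$. For a matrix $A:\mathbb{R}^s_\Delta\to\mathbb{R}^m_M$ the Hilbert adjoint is $A^*=\Delta^{-1}A^TM$. If $A$ has exactly $k$ positive singular values $\sigma_1\ge\cdots\ge\sigma_k>0$, a core SVD of $A$ is a factorization $A=V\Sigma W^*$ with $\Sigma=\mathrm{diag}(\sigma_1,\dots,\sigma_k)$, $V\in\mathbb{R}^{m\times k}$ whose columns are $M$-orthonormal eigenvectors of $AA^*$, $W\in\mathbb{R}^{s\times k}$ whose columns are $\Delta$-orthonormal eigenvectors of $A^*A$, satisfying $AW=V\Sigma$, $A^*V=W\Sigma$, and $W^*=W^T\Delta$. The standard core SVD is the case where both inner products are the standard unweighted ones. *)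

From HB Require Import structures.
From mathcomp Require Import all_boot all_order all_algebra.
Set Implicit Arguments. Unset Strict Implicit. Unset Printing Implicit Defensive.
Import Order.TTheory GRing.Theory Num.Theory.
Local Open Scope ring_scope.

Definition spd (R : realFieldType) (n : nat) (M : 'M[R]_n) : Prop :=
  M^T = M /\ forall x : 'cV[R]_n, x != 0 -> 0 < (x^T *m M *m x) 0 0.

(* Hilbert adjoint of A : R^s_D -> R^m_M, namely D^{-1} A^T M *)
Definition hadj (R : realFieldType) (m s : nat) (M : 'M[R]_m) (D : 'M[R]_s)
  (A : 'M[R]_(m, s)) : 'M[R]_(s, m) := invmx D *m A^T *m M.

(* Core SVD A = V Sigma W^* of A : R^s_D -> R^m_M, Sigma = diag sig,
   with sig listing exactly the positive singular values of A (with
   multiplicity, nonincreasing): the eigenvalues of A^*A are the sig_i^2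
   together with 0 of multiplicity s - k. *)
Definition is_core_svd (R : realFieldType) (m s k : nat) (M : 'M[R]_m)
  (D : 'M[R]_s) (A : 'M[R]_(m, s)) (V : 'M[R]_(m, k)) (sig : 'rV[R]_k)
  (W : 'M[R]_(s, k)) : Prop :=
  (forall i : 'I_k, 0 < sig 0 i) /\
      (forall i j : 'I_k, (i <= j)%N -> sig 0 j <= sig 0 i) /\
      char_poly (hadj M D A *m A) =
        'X^(s - k) * \prod_(i < k) ('X - ((sig 0 i) ^+ 2)%:P) /\
      V^T *m M *m V = 1%:M /\
        ((forall i : 'I_k, exists l : R,
            (A *m hadj M D A) *m col i V = l *: col i V)) /\
      W^T *m D *m W = 1%:M /\
        ((forall i : 'I_k, exists l : R,
            (hadj M D A *m A) *m col i W = l *: col i W)) /\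
      A *m W = V *m diag_mx sig /\
      hadj M D A *m V = W *m diag_mx sig /\
      A = V *m diag_mx sig *m (W^T *m D).

From HB Require Import structures.
From mathcomp Require Import all_boot all_order all_algebra.
From mathcomp Require Import ring zify.
Import Order.TTheory GRing.Theory Num.Theory.
Local Open Scope ring_scope.

(* The column [j] is the normalised M-orthogonal residual of [c], so [[V j]] has
   M-orthonormal columns, [W_u] has Delta_new-orthonormal columns, and
   [[U c] Delta_new = [V j] Q W_u^*].  Composing the core SVD of [Q] with these
   two isometries yields the claimed core SVD: the eigenvector relations follow
   from the factorisation alone, and since [A^* A] is the product of [W_u] and
   [Q^T Q W_u^*] in one order and equals [Q^T Q] in the other, Sylvester's
   identity shows that the spectra differ only by zeros. *)

(* Sylvester's identity, read off the two block triangular factorisations of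
   [[X, A], [X B, X]]. *)
Lemma char_poly_mulmxC {R : comNzRingType} m n (A : 'M[R]_(m, n))
    (B : 'M[R]_(n, m)) :
  'X^n * char_poly (A *m B) = 'X^m * char_poly (B *m A).
Proof.
set A' := map_mx polyC A; set B' := map_mx polyC B.
set T := block_mx 'X%:M A' ('X *: B') 'X%:M : 'M[{poly R}]_(m + n).
set L := block_mx 1%:M 0 (- B') 1%:M : 'M[{poly R}]_(m + n).
have detL : \det L = 1 by rewrite det_lblock !det1 mulr1.
have LT : L *m T = block_mx 'X%:M A' 0 ('X%:M - B' *m A').
  rewrite mulmx_block !mul1mx !mul0mx !addr0.
  by rewrite !mulNmx mul_mx_scalar addNr addrC.
have TL : T *m L = block_mx ('X%:M - A' *m B') A' 0 'X%:M.
  rewrite mulmx_block !mulmx1 !mulmx0.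
  by rewrite !add0r !mulmxN mul_scalar_mx subrr.
have := congr1 determinant TL; rewrite det_mulmx detL mulr1 det_ublock => detT.
have := congr1 determinant LT; rewrite det_mulmx detL mul1r det_ublock detT.
by rewrite /char_poly /char_poly_mx !map_mxM -/A' -/B' -!det_scalar mulrC.
Qed.

Section WeightedCoreSVD.
Variable R : realFieldType.

Lemma diag_mx_unit n (d : 'rV[R]_n) :
  (forall i, 0 < d 0 i) -> diag_mx d \in unitmx.
Proof.
move=> d_gt0; rewrite unitmxE det_diag unitfE; apply: lt0r_neq0.
by apply: prodr_gt0 => i _; apply: d_gt0.
Qed.

Lemma col_mul_diag_mx m k (B : 'M[R]_(m, k)) (sig : 'rV[R]_k) i :
  col i (B *m diag_mx sig) = sig 0 i *: col i B.
Proof. by rewrite mul_mx_diag; apply/matrixP => a b; rewrite !mxE mulrC. Qed.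

Lemma gram_mulmx m r k (M : 'M[R]_m) (B : 'M[R]_(m, r)) (C : 'M[R]_(r, k)) :
  (B *m C)^T *m M *m (B *m C) = C^T *m (B^T *m M *m B) *m C.
Proof. by rewrite trmx_mul !mulmxA. Qed.

Lemma gram1_leq m r (M : 'M[R]_m) (B : 'M[R]_(m, r)) :
  B^T *m M *m B = 1%:M -> (r <= m)%N.
Proof.
move=> gramB; rewrite -(mxrank1 R r) -gramB.
apply: leq_trans (mxrankM_maxl _ _) _.
exact: leq_trans (mxrankM_maxl _ _) (rank_leq_col _).
Qed.

Lemma orthonormal_row_mx m r1 r2 (M : 'M[R]_m) (B1 : 'M[R]_(m, r1))
    (B2 : 'M[R]_(m, r2)) :
  M^T = M -> B1^T *m M *m B1 = 1%:M -> B1^T *m M *m B2 = 0 ->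
  B2^T *m M *m B2 = 1%:M ->
  (row_mx B1 B2)^T *m M *m row_mx B1 B2 = 1%:M.
Proof.
move=> MT gram1 orth12 gram2.
have orth21 : B2^T *m M *m B1 = 0.
  have <- : (B1^T *m M *m B2)^T = B2^T *m M *m B1.
    by rewrite !trmx_mul trmxK MT mulmxA.
  by rewrite orth12 trmx0.
rewrite tr_row_mx mul_col_mx mul_col_row.
by rewrite gram1 gram2 orth12 orth21 -scalar_mx_block.
Qed.

Lemma hadj_factor m n r1 r2 (M : 'M[R]_m) (D : 'M[R]_n) (B : 'M[R]_(m, r1))
    (Q : 'M[R]_(r1, r2)) (C : 'M[R]_(n, r2)) :
  D^T = D -> D \in unitmx ->
  hadj M D (B *m Q *m (C^T *m D)) = C *m Q^T *m B^T *m M.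
Proof.
move=> DT unitD; rewrite /hadj !trmx_mul trmxK DT.
by rewrite !mulmxA mulVmx // mul1mx.
Qed.

Lemma hadj1 r1 r2 (Q : 'M[R]_(r1, r2)) : hadj 1%:M 1%:M Q = Q^T.
Proof. by rewrite /hadj invmx1 mul1mx mulmx1. Qed.

Lemma core_svd_of_factor m n k (M : 'M[R]_m) (D : 'M[R]_n) (A : 'M[R]_(m, n))
    (V : 'M[R]_(m, k)) (sig : 'rV[R]_k) (W : 'M[R]_(n, k)) :
  D^T = D -> D \in unitmx ->
  (forall i, 0 < sig 0 i) ->
  (forall i j : 'I_k, (i <= j)%N -> sig 0 j <= sig 0 i) ->
  char_poly (hadj M D A *m A) =
    'X^(n - k) * \prod_(i < k) ('X - (sig 0 i ^+ 2)%:P) ->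
  V^T *m M *m V = 1%:M -> W^T *m D *m W = 1%:M ->
  A = V *m diag_mx sig *m (W^T *m D) ->
  is_core_svd M D A V sig W.
Proof.
move=> DT unitD sig_gt0 sig_dec charA gramV gramW defA.
have AW : A *m W = V *m diag_mx sig.
  by rewrite defA -!mulmxA (mulmxA W^T) gramW mulmx1.
have AstarV : hadj M D A *m V = W *m diag_mx sig.
  rewrite defA hadj_factor // tr_diag_mx.
  by rewrite -!mulmxA (mulmxA V^T) gramV mulmx1.
do !split => //; move=> i; exists (sig 0 i * sig 0 i).
- rewrite colE mulmxA -(mulmxA A) AstarV mulmxA AW.
  by rewrite -!colE !col_mul_diag_mx scalerA.
- rewrite colE mulmxA -(mulmxA _ A) AW mulmxA AstarV.
  by rewrite -!colE !col_mul_diag_mx scalerA.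
Qed.

Lemma char_poly_hadj_factor m n r1 r2 (M : 'M[R]_m) (D : 'M[R]_n)
    (B : 'M[R]_(m, r1)) (Q : 'M[R]_(r1, r2)) (C : 'M[R]_(n, r2)) :
  D^T = D -> D \in unitmx -> B^T *m M *m B = 1%:M -> C^T *m D *m C = 1%:M ->
  let A := B *m Q *m (C^T *m D) in
  'X^r2 * char_poly (hadj M D A *m A) = 'X^n * char_poly (Q^T *m Q).
Proof.
move=> DT unitD gramB gramC A.
have -> : hadj M D A *m A = C *m (Q^T *m Q *m (C^T *m D)).
  rewrite /A hadj_factor // -!mulmxA (mulmxA M) (mulmxA B^T) (mulmxA B^T M) gramB.
  by rewrite mul1mx (mulmxA Q^T).
by rewrite char_poly_mulmxC -!mulmxA (mulmxA C^T) gramC mulmx1.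
Qed.

Lemma core_svd_isometry m n r1 r2 kq (M : 'M[R]_m) (D : 'M[R]_n)
    (B : 'M[R]_(m, r1)) (Q : 'M[R]_(r1, r2)) (C : 'M[R]_(n, r2))
    (VQ : 'M[R]_(r1, kq)) (sigQ : 'rV[R]_kq) (WQ : 'M[R]_(r2, kq)) :
  D^T = D -> D \in unitmx -> B^T *m M *m B = 1%:M -> C^T *m D *m C = 1%:M ->
  is_core_svd 1%:M 1%:M Q VQ sigQ WQ ->
  is_core_svd M D (B *m Q *m (C^T *m D)) (B *m VQ) sigQ (C *m WQ).
Proof.
move=> DT unitD gramB gramC.
move=> [sigQ_gt0 [sigQ_dec [charQ [gramVQ [_ [gramWQ [_ [_ [_ defQ]]]]]]]]].
have gramBVQ : (B *m VQ)^T *m M *m (B *m VQ) = 1%:M by rewrite gram_mulmx gramB.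
have gramCWQ : (C *m WQ)^T *m D *m (C *m WQ) = 1%:M by rewrite gram_mulmx gramC.
apply: core_svd_of_factor => //; last first.
  by rewrite {1}defQ trmx_mul mulmx1 !mulmxA.
have le_kq_r2 : (kq <= r2)%N by apply: gram1_leq gramWQ.
have le_kq_n : (kq <= n)%N by apply: gram1_leq gramCWQ.
apply: (mulfI (x := 'X^r2)); first by rewrite expf_neq0 // polyX_eq0.
rewrite hadj1 in charQ.
rewrite char_poly_hadj_factor // charQ !mulrA -!exprD.
by congr (_ ^+ _ * _); lia.
Qed.

Lemma residual_orthogonal m k (M : 'M[R]_m) (V : 'M[R]_(m, k)) (c : 'cV[R]_m) :
  V^T *m M *m V = 1%:M -> V^T *m M *m (c - V *m (V^T *m M *m c)) = 0.
Proof. by move=> gramV; rewrite mulmxBr !mulmxA gramV mul1mx subrr. Qed.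

Lemma diag_mx_row_scalar n (d : 'rV[R]_n) (e : R) :
  diag_mx (row_mx d e%:M) = block_mx (diag_mx d) 0 0 e%:M.
Proof.
rewrite diag_mx_row; congr (block_mx _ _ _ _).
by apply/matrixP => a b; rewrite [a]ord1 [b]ord1 !mxE eqxx.
Qed.

Lemma gram_block_diag m1 m2 r1 r2 (D1 : 'M[R]_m1) (D2 : 'M[R]_m2)
    (W1 : 'M[R]_(m1, r1)) (W2 : 'M[R]_(m2, r2)) :
  (block_mx W1 0 0 W2)^T *m block_mx D1 0 0 D2 *m block_mx W1 0 0 W2 =
  block_mx (W1^T *m D1 *m W1) 0 0 (W2^T *m D2 *m W2).
Proof.
rewrite tr_block_mx !trmx0 !mulmx_block.
by rewrite !(mulmx0, mul0mx, addr0, add0r).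
Qed.

(* The weight [a] of the new column is arbitrary here: it cancels between
   [Q] and [W_u]. *)
Lemma rank_one_update_factor m s k (U : 'M[R]_(m, s)) (c : 'cV[R]_m)
    (d : 'rV[R]_s) (e a p : R) (V : 'M[R]_(m, k)) (sig : 'rV[R]_k)
    (W : 'M[R]_(s, k)) (x : 'cV[R]_k) :
  a != 0 -> p != 0 -> U *m diag_mx d = V *m diag_mx sig *m (W^T *m diag_mx d) ->
  row_mx U c *m diag_mx (row_mx d e%:M) =
  row_mx V (p^-1 *: (c - V *m x)) *m
    block_mx (diag_mx sig) (a *: x) 0 (a * p)%:M *m
    ((block_mx W 0 0 a^-1%:M)^T *m diag_mx (row_mx d e%:M)).
Proof.
move=> a_neq0 p_neq0 defUD.
rewrite diag_mx_row_scalar tr_block_mx !trmx0 tr_scalar_mx mulmx_block.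
rewrite -mulmxA mulmx_block !mul_row_block !(mulmx0, mul0mx, addr0, add0r).
congr row_mx; first by rewrite defUD -mulmxA.
rewrite -!scalar_mxM !mul_mx_scalar !scalerA -scalemxAr.
have -> : a^-1 * e * a = e by field.
have -> : a * p * (a^-1 * e) * p^-1 = e by field; rewrite a_neq0 p_neq0.
by rewrite -scalerDr addrC subrK.
Qed.

End WeightedCoreSVD.

Section SquareRoots.
Variable R : rcfType.

Lemma gram_normalize m (M : 'M[R]_m) (h : 'cV[R]_m) :
  let p := Num.sqrt ((h^T *m M *m h) 0 0) in
  0 < p -> (p^-1 *: h)^T *m M *m (p^-1 *: h) = 1%:M.
Proof.
move=> p p_gt0; set q := (h^T *m M *m h) 0 0.
have p2 : p ^+ 2 = q by rewrite sqr_sqrtr // ltW // -sqrtr_gt0.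
rewrite -scalemxAr linearZ /= -!scalemxAl [h^T *m M *m h]mx11_scalar -/q.
by rewrite scalerA scale_scalar_mx -p2; congr (_%:M); field; rewrite gt_eqF.
Qed.

Lemma gram_invsqrt_scalar n (e : R) :
  0 < e -> ((Num.sqrt e)^-1%:M)^T *m e%:M *m (Num.sqrt e)^-1%:M = 1%:M :> 'M_n.
Proof.
move=> e_gt0; rewrite tr_scalar_mx -!scalar_mxM; congr (_%:M).
set r := Num.sqrt e; have <- : r ^+ 2 = e by rewrite sqr_sqrtr // ltW.
by field; rewrite gt_eqF ?sqrtr_gt0.
Qed.

End SquareRoots.

Theorem theorem4p1 (R : rcfType) (m s k kq : nat)
  (M : 'M[R]_m) (d : 'rV[R]_s) (e : R) (U : 'M[R]_(m, s))
  (V : 'M[R]_(m, k)) (sig : 'rV[R]_k) (W : 'M[R]_(s, k)) (c : 'cV[R]_m)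
  (VQ : 'M[R]_(k + 1, kq)) (sigQ : 'rV[R]_kq) (WQ : 'M[R]_(k + 1, kq)) :
  spd M ->
  (forall i : 'I_s, 0 < d 0 i) -> 0 < e ->
  is_core_svd M (diag_mx d) (U *m diag_mx d) V sig W ->
  let Vstar_c := V^T *m M *m c in
  let h := c - V *m Vstar_c in
  let p := Num.sqrt ((h^T *m M *m h) 0 0) in
  let Q : 'M[R]_(k + 1, k + 1) :=
    block_mx (diag_mx sig) (Num.sqrt e *: Vstar_c)
             0 (Num.sqrt e * p)%:M in
  0 < p ->
  is_core_svd 1%:M 1%:M Q VQ sigQ WQ ->
  let Dnew : 'M[R]_(s + 1) := diag_mx (row_mx d e%:M) in
  let j := p^-1 *: h in
  let Vnew := row_mx V j *m VQ in
  let Wu : 'M[R]_(s + 1, k + 1) :=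
    block_mx W 0 0 (Num.sqrt e)^-1%:M in
  let Wnew := Wu *m WQ in
  is_core_svd M Dnew (row_mx U c *m Dnew) Vnew sigQ Wnew.
Proof.
move=> [MT _] d_gt0 e_gt0 [_ [_ [_ [gramV [_ [gramW [_ [_ [_ defUD]]]]]]]]].
move=> Vstar_c h p Q p_gt0 svdQ Dnew j Vnew Wu Wnew.
have factorA : row_mx U c *m Dnew = row_mx V j *m Q *m (Wu^T *m Dnew).
  rewrite /Dnew /j /h /Q /Wu.
  by apply: rank_one_update_factor => //; apply: lt0r_neq0 => //; rewrite sqrtr_gt0.
rewrite factorA.
apply: core_svd_isometry svdQ.
- exact: tr_diag_mx.
- apply: diag_mx_unit => i; rewrite mxE; case: splitP => i' _; first exact: d_gt0.
  by rewrite [i']ord1 mxE eqxx mulr1n.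
- apply: orthonormal_row_mx => //; last exact: gram_normalize.
  by rewrite /j -scalemxAr residual_orthogonal // scaler0.
- rewrite /Dnew diag_mx_row_scalar gram_block_diag gramW.
  by rewrite gram_invsqrt_scalar // -scalar_mx_block.
Qed.
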